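(* Let $L_\alpha(x,t)=\partial/\partial x^\alpha-\hbar^{-1}C_\alpha(x,t)$, $\alpha=1,\dots,n$, be pairwise commuting for each $t$ and satisfy, for a fixed $b\in Diag[\hbar^{-1}]$, $$\frac{\partial L_\alpha}{\partial t}=[\varphi(b)_{\le-1},L_\alpha]\quad(\alpha=1,\dots,n).$$ Let $T(x,t)$ be a dressing transformation depending smoothly on $t$, with $T^{-1}L_\alpha T=\partial/\partial x^\alpha+\sum_{k\ge-1}\hbar^kh_{k,\alpha}(x,t)$, $h_{k,\alpha}(x,t)\in Diag$. Then for each $k$ there is a diagonal-matrix-valued function $B_k(x,t)$, independent of $\alpha$, such that $$\frac{\partial h_{k,\alpha}}{\partial t}+\frac{\partial B_k}{\partial x^\alpha}=0\quad\text{for all }\alpha.$$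
   Context: $C_\alpha$ are $Mat(n,\mathbb C)$-valued analytic functions of $x$ in a domain of $\mathbb C^n$ and of $t$; $Diag$: diagonal matrices; $Diag[\hbar^{-1}]$: polynomials in $\hbar^{-1}$ with constant diagonal coefficients. A dressing transformation is an invertible $T\in Mat(n,\mathbb C)[[\hbar]]$ with $T^{-1}L_\alpha T=\partial/\partial x^\alpha+h_\alpha$, $h_\alpha\in\hbar^{-1}Diag[[\hbar]]$ for all $\alpha$; it is assumed to exist and is assumed that the leading terms $h_{-1,\alpha}$, $\alpha=1,\dots,n$, span $Diag$ (as in the semisimple Frobenius setting). $\varphi(b)=TbT^{-1}$. For a Laurent series $v=\sum_lv_l\hbar^l$, $v_{\le k}=\sum_{l\le k}v_l\hbar^l$. Conjugation $T^{-1}(\partial+A)T=\partial+T^{-1}\partial T+T^{-1}AT$; $[\partial+A,M]=\partial M+[A,M]$. *)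

(* Abstract differential-algebra rendering of the setting:
   F = ring of (analytic) scalar functions of (x,t), with commuting
   derivations d_alpha = d/dx^alpha and dt = d/dt. *)
From mathcomp Require Import all_boot all_order all_algebra.
Set Implicit Arguments. Unset Strict Implicit. Unset Printing Implicit Defensive.
Import GRing.Theory.
Local Open Scope ring_scope.

Section Defs.
Variables (F : comUnitRingType) (n : nat).

Definition is_derivation (d : F -> F) : Prop :=
  (forall a b, d (a + b) = d a + d b) /\ (forall a b, d (a * b) = d a * b + a * d b).

(* Laurent series in hbar with coefficients in Mat(n, F): k |-> coefficient of hbar^k *)
Definition lser := int -> 'M[F]_n.

Definition lbounded (N : nat) (A : lser) : Prop := forall k : int, k < - (N%:Z) -> A k = 0.

(* product of two Laurent series, both supported in degrees >= -N
   (Cauchy product, the sum being finite): (AB)_k = sum_{i+j=k} A_i B_j *)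
Definition lmul (N : nat) (A B : lser) : lser := fun k =>
  \sum_(i < (absz (k + (2 * N)%:Z)).+1) A (i%:Z - N%:Z) *m B (k - i%:Z + N%:Z).

Definition ladd (A B : lser) : lser := fun k => A k + B k.
Definition lopp (A : lser) : lser := fun k => - A k.
Definition lcomm (N : nat) (A B : lser) : lser := fun k => lmul N A B k - lmul N B A k.

Definition lone : lser := fun k => if k == 0 then 1%:M else 0.

Definition lder (d : F -> F) (A : lser) : lser := fun k => map_mx d (A k).

Definition ltrunc (m : int) (A : lser) : lser := fun k => if k <= m then A k else 0.

Definition hinv (M : 'M[F]_n) : lser := fun k => if k == -1 then M else 0.

(* Multiplicative part of the conjugated operator T^{-1}(d + A)T
   = d + T^{-1} dT + T^{-1} A T   (Tinv is the inverse series of T) *)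
Definition conj_op (N : nat) (d : F -> F) (Tinv T A : lser) : lser :=
  ladd (lmul N Tinv (lder d T)) (lmul N (lmul N Tinv A) T).

(* [d1 + A1, d2 + A2] for commuting derivations d1, d2:
   the multiplication operator d1 A2 - d2 A1 + [A1, A2] *)
Definition comm_op (N : nat) (d1 : F -> F) (A1 : lser) (d2 : F -> F) (A2 : lser)
  : lser := fun k => lder d1 A2 k - lder d2 A1 k + lcomm N A1 A2 k.

End Defs.

From mathcomp Require Import all_boot all_order all_algebra.
From mathcomp Require Import zify ring.
From Stdlib Require Import FunctionalExtensionality.
Set Implicit Arguments. Unset Strict Implicit. Unset Printing Implicit Defensive.
Import Order.TTheory GRing.Theory.
Local Open Scope ring_scope.

(* Write A_a = -hbar^-1 C_a and P = phi(b)_{<= -1}.  The flow equation says exactly that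
   [d_t - P, d_a + A_a] = 0.  Conjugation by T preserves commutators, so with
   R = T^-1 d_t T - T^-1 P T we get [d_t + R, d_a + h_a] = 0, i.e.
   d_t h_a = d_a R + [h_a, R].  Since h_a is diagonal, [h_a, R] has zero diagonal, and
   B_k = -diag(R_k) works for every a at once. *)

Section Derivation.
Variables (F : comUnitRingType) (d : F -> F).
Hypothesis hd : is_derivation d.

Lemma derD a b : d (a + b) = d a + d b. Proof. by case: hd. Qed.
Lemma derM a b : d (a * b) = d a * b + a * d b. Proof. by case: hd. Qed.
Lemma der0 : d 0 = 0. Proof. by apply/(addrI (d 0)); rewrite -derD !addr0. Qed.
Lemma derN a : d (- a) = - d a.
Proof. by apply/(addrI (d a)); rewrite -derD !subrr der0. Qed.

Lemma map_mx_der0 m p : map_mx d (0 : 'M[F]_(m, p)) = 0.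
Proof. by apply/matrixP => i j; rewrite !mxE der0. Qed.
Lemma map_mx_derD m p (A B : 'M[F]_(m, p)) : map_mx d (A + B) = map_mx d A + map_mx d B.
Proof. by apply/matrixP => i j; rewrite !mxE derD. Qed.
Lemma map_mx_derN m p (A : 'M[F]_(m, p)) : map_mx d (- A) = - map_mx d A.
Proof. by apply/matrixP => i j; rewrite !mxE derN. Qed.
Lemma map_mx_der_sum m p I (r : seq I) (P : pred I) (f : I -> 'M[F]_(m, p)) :
  map_mx d (\sum_(i <- r | P i) f i) = \sum_(i <- r | P i) map_mx d (f i).
Proof. exact: (big_morph (map_mx d) (@map_mx_derD m p) (@map_mx_der0 m p)). Qed.
Lemma map_mx_derM m p q (A : 'M[F]_(m, p)) (B : 'M[F]_(p, q)) :
  map_mx d (A *m B) = map_mx d A *m B + A *m map_mx d B.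
Proof.
apply/matrixP => i j; rewrite !mxE (big_morph d derD der0) -big_split.
by apply: eq_bigr => l _; rewrite derM !mxE.
Qed.
End Derivation.

Section Convolution.
Variable R : pzRingType.

Definition conv (u v : nat -> R) m := \sum_(i < m.+1) u i * v (m - i)%N.

Lemma conv_shiftl (u w : nat -> R) m N : (forall j, (j < N)%N -> u j = 0) ->
  conv u w (N + m) = conv (fun i => u (N + i)%N) w m.
Proof.
move=> hu; rewrite /conv -addnS big_split_ord /= big1 ?add0r.
  by apply: eq_bigr => i _; rewrite subnDl.
by move=> i _; rewrite hu ?mul0r.
Qed.

Lemma conv_shiftr (u v : nat -> R) m N : (forall j, (j < N)%N -> v j = 0) ->
  conv u v (N + m) = conv u (fun i => v (N + i)%N) m.
Proof.
move=> hv; rewrite /conv addnC -addSn big_split_ord /= [X in _ + X]big1 ?addr0.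
  by apply: eq_bigr => i _; rewrite addnC addnBA // -ltnS.
by move=> i _; rewrite hv ?mulr0 //; have := ltn_ord i; lia.
Qed.
End Convolution.

(* Convolutions up to degree [m] are coefficients of products of truncated polynomials. *)
Lemma convA (R : nzRingType) (u v w : nat -> R) m :
  conv (conv u v) w m = conv u (conv v w) m.
Proof.
pose pol (s : nat -> R) : {poly R} := \poly_(i < m.+1) s i.
have polE s i : (i <= m)%N -> (pol s)`_i = s i by move=> hi; rewrite coef_poly ltnS hi.
have convE (s t : nat -> R) (p q : {poly R}) j : (j <= m)%N ->
    (forall i, (i <= m)%N -> p`_i = s i) -> (forall i, (i <= m)%N -> q`_i = t i) ->
    (p * q)`_j = conv s t j.
  move=> hj hp hq; rewrite coefM; apply: eq_bigr => i _.
  have hi : (i <= j)%N by rewrite -ltnS.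
  by rewrite hp ?hq ?(leq_trans hi) ?(leq_trans (leq_subr i j)).
have uv i : (i <= m)%N -> (pol u * pol v)`_i = conv u v i.
  by move=> hi; exact: convE hi (polE u) (polE v).
have vw i : (i <= m)%N -> (pol v * pol w)`_i = conv v w i.
  by move=> hi; exact: convE hi (polE v) (polE w).
rewrite -(convE _ _ _ _ m (leqnn m) uv (polE w)).
by rewrite -(convE _ _ _ _ m (leqnn m) (polE u) vw) mulrA.
Qed.

Lemma convA_mx (R : nzRingType) n (u v w : nat -> 'M[R]_n) m :
  conv (conv u v) w m = conv u (conv v w) m.
Proof. by case: n u v w => [|n'] u v w; [apply/matrixP => -[] | exact: convA]. Qed.

Section LaurentSeries.
Variables (F : comUnitRingType) (n N : nat).
Local Notation ls := (lser F n).
Implicit Types (A B C : ls) (d : F -> F).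

Lemma lmulDl A B C : lmul N (ladd A B) C = ladd (lmul N A C) (lmul N B C).
Proof.
apply: functional_extensionality => k; rewrite /lmul /ladd -big_split.
by apply: eq_bigr => i _; rewrite mulmxDl.
Qed.
Lemma lmulDr A B C : lmul N A (ladd B C) = ladd (lmul N A B) (lmul N A C).
Proof.
apply: functional_extensionality => k; rewrite /lmul /ladd -big_split.
by apply: eq_bigr => i _; rewrite mulmxDr.
Qed.
Lemma lmulNl A B : lmul N (lopp A) B = lopp (lmul N A B).
Proof.
apply: functional_extensionality => k; rewrite /lmul /lopp -sumrN.
by apply: eq_bigr => i _; rewrite mulNmx.
Qed.
Lemma lmulNr A B : lmul N A (lopp B) = lopp (lmul N A B).
Proof.
apply: functional_extensionality => k; rewrite /lmul /lopp -sumrN.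
by apply: eq_bigr => i _; rewrite mulmxN.
Qed.
Lemma lmul0l A : lmul N (fun _ => 0) A = fun _ => 0.
Proof. by apply: functional_extensionality => k; rewrite /lmul big1 // => i _; rewrite mul0mx. Qed.
Lemma lmul0r A : lmul N A (fun _ => 0) = fun _ => 0.
Proof. by apply: functional_extensionality => k; rewrite /lmul big1 // => i _; rewrite mulmx0. Qed.

Lemma comm_opE d1 A1 d2 A2 : comm_op N d1 A1 d2 A2 =
  ladd (ladd (lder d1 A2) (lopp (lder d2 A1))) (ladd (lmul N A1 A2) (lopp (lmul N A2 A1))).
Proof. by []. Qed.

Lemma lderD d A B : is_derivation d -> lder d (ladd A B) = ladd (lder d A) (lder d B).
Proof. by move=> hd; apply: functional_extensionality => k; rewrite /lder map_mx_derD. Qed.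
Lemma lderN d A : is_derivation d -> lder d (lopp A) = lopp (lder d A).
Proof. by move=> hd; apply: functional_extensionality => k; rewrite /lder map_mx_derN. Qed.
Lemma lderM d A B : is_derivation d ->
  lder d (lmul N A B) = ladd (lmul N (lder d A) B) (lmul N A (lder d B)).
Proof.
move=> hd; apply: functional_extensionality => k.
rewrite /lder /lmul /ladd map_mx_der_sum // -big_split.
by apply: eq_bigr => i _; rewrite map_mx_derM.
Qed.

Lemma lbounded_le p q A : (p <= q)%N -> lbounded p A -> lbounded q A.
Proof. by move=> hpq hA k hk; apply: hA; lia. Qed.
Lemma lbounded_ladd p A B : lbounded p A -> lbounded p B -> lbounded p (ladd A B).
Proof. by move=> hA hB k hk; rewrite /ladd hA ?hB ?addr0. Qed.
Lemma lbounded_lopp p A : lbounded p A -> lbounded p (lopp A).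
Proof. by move=> hA k hk; rewrite /lopp hA ?oppr0. Qed.
Lemma lbounded_lder p d A : is_derivation d -> lbounded p A -> lbounded p (lder d A).
Proof. by move=> hd hA k hk; rewrite /lder hA ?map_mx_der0. Qed.
Lemma lbounded_ltrunc p m A : lbounded p A -> lbounded p (ltrunc m A).
Proof. by move=> hA k hk; rewrite /ltrunc hA ?if_same. Qed.
Lemma lbounded_lmul p q A B : lbounded p A -> lbounded q B -> lbounded (p + q) (lmul N A B).
Proof.
move=> hA hB k hk; rewrite /lmul big1 // => i _.
have [hi|hi] := ltP ((i : nat)%:Z - N%:Z) (- p%:Z); first by rewrite hA ?mul0mx.
by rewrite hB ?mulmx0 //; lia.
Qed.
Lemma lbounded_comm_op p1 p2 d1 d2 A1 A2 : is_derivation d1 -> is_derivation d2 ->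
  lbounded p1 A1 -> lbounded p2 A2 -> lbounded (p1 + p2) (comm_op N d1 A1 d2 A2).
Proof.
move=> hd1 hd2 hA1 hA2; rewrite comm_opE.
have hw p A : lbounded p A -> (p <= p1 + p2)%N -> lbounded (p1 + p2) A.
  by move=> hA hp; exact: lbounded_le hp hA.
apply: lbounded_ladd; apply: lbounded_ladd; try apply: lbounded_lopp.
- by apply: hw (leq_addl _ _); exact: lbounded_lder.
- by apply: hw (leq_addr _ _); exact: lbounded_lder.
- exact: lbounded_lmul.
- by rewrite addnC; exact: lbounded_lmul.
Qed.

Lemma lmul_below A B k : lbounded N B -> k + (2 * N)%:Z < 0 -> lmul N A B k = 0.
Proof. by move=> hB hk; rewrite /lmul big1 // => i _; rewrite hB ?mulmx0 //; lia. Qed.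

(* The coefficient sequence of [hbar^N A], a power series when [lbounded N A]. *)
Definition lshift A (i : nat) := A (i%:Z - N%:Z).

Lemma lmul_conv A B k : 0 <= k + (2 * N)%:Z ->
  lmul N A B k = conv (lshift A) (lshift B) (absz (k + (2 * N)%:Z)).
Proof.
move=> hk; rewrite /lmul /conv; apply: eq_bigr => i _; rewrite /lshift mulmxE.
have hi := ltn_ord i; congr (_ * B _); lia.
Qed.

Lemma lshift_lmul A B : lshift (lmul N A B) = fun i => conv (lshift A) (lshift B) (N + i).
Proof.
apply: functional_extensionality => i; rewrite /lshift lmul_conv; last by lia.
by congr conv; lia.
Qed.

Lemma lmulA p q r A B C : lbounded p A -> lbounded q B -> lbounded r C ->
  (p + q + r <= N)%N -> lmul N (lmul N A B) C = lmul N A (lmul N B C).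
Proof.
move=> hA hB hC hN; apply: functional_extensionality => k.
have hAB : lbounded N (lmul N A B) by apply: lbounded_le (lbounded_lmul hA hB); lia.
have hBC : lbounded N (lmul N B C) by apply: lbounded_le (lbounded_lmul hB hC); lia.
have hCN : lbounded N C by apply: lbounded_le hC; lia.
have [hk|hk] := ltP (k + (2 * N)%:Z) 0; first by rewrite !lmul_below.
have prefix0 X Y j : lbounded N (lmul N X Y) -> (j < N)%N ->
    conv (lshift X) (lshift Y) j = 0.
  move=> hXY hj; have := @lmul_conv X Y (j%:Z - (2 * N)%:Z).
  by rewrite subrK absz_nat => <- //; rewrite hXY //; lia.
rewrite !lmul_conv // !lshift_lmul -conv_shiftl => [|j]; last exact: prefix0.
by rewrite -conv_shiftr => [|j]; [exact: convA_mx | exact: prefix0].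
Qed.

Lemma lmul1l A : lbounded N A -> lmul N (lone F n) A = A.
Proof.
move=> hA; apply: functional_extensionality => k; rewrite /lmul /lone.
under eq_bigr => i _ do rewrite subr_eq0 eqz_nat.
set m := absz _; have [hN|hN] := ltnP N m.+1.
  rewrite (bigD1 (Ordinal hN)) //= eqxx mul1mx subrK big1 ?addr0 // => i hi.
  by rewrite ifN ?mul0mx.
rewrite big1 ?hA //; first by lia.
by move=> i _; rewrite ifN ?mul0mx //; have := ltn_ord i; lia.
Qed.

Lemma lcomm_diag_eq0 (H X : ls) k i : (forall l, is_diag_mx (H l)) ->
  lbounded N H -> lbounded N X -> lcomm N X H k i i = 0.
Proof.
move=> hH hHN hXN; rewrite !mxE; apply/eqP; rewrite subr_eq0; apply/eqP.
have [hk|hk] := ltP (k + (2 * N)%:Z) 0; first by rewrite !lmul_below.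
rewrite !lmul_conv // /conv !summxE [RHS](reindex_inj rev_ord_inj) /=.
set m := absz _; apply: eq_bigr => l _; rewrite subSS subKn ?leq_ord // /lshift.
have /diag_mxP[e ->] := hH ((m - l)%N%:Z - N%:Z).
by rewrite -!mulmxE mul_diag_mx mul_mx_diag !mxE mulrC.
Qed.

Lemma comm_op_diag d dt (R H : ls) k i :
  (forall l, is_diag_mx (H l)) -> lbounded N H -> lbounded N R ->
  comm_op N dt R d H = (fun _ => 0) -> dt (H k i i) = d (R k i i).
Proof.
move=> hH hHN hRN /(congr1 (fun X : ls => X k i i)).
by rewrite /comm_op mxE lcomm_diag_eq0 // addr0 !mxE => /eqP; rewrite subr_eq0 => /eqP.
Qed.

Lemma lmul_lder d A B : is_derivation d ->
  lmul N A (lder d B) = ladd (lder d (lmul N A B)) (lopp (lmul N (lder d A) B)).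
Proof.
move=> hd; rewrite lderM //; apply: functional_extensionality => k.
by rewrite /ladd /lopp addrC addKr.
Qed.

Lemma flow_comm_op_eq0 d dt A P : is_derivation d ->
  lder dt A = lopp (comm_op N d A (fun _ => 0) P) ->
  comm_op N dt (lopp P) d A = (fun _ => 0).
Proof.
move=> hd hflow; rewrite comm_opE hflow comm_opE lmulNl lmulNr lderN //.
apply: functional_extensionality => k; rewrite /ladd /lopp.
by apply/matrixP => i j; rewrite !mxE /=; ring.
Qed.
End LaurentSeries.

Section Intertwining.
Variables (F : comUnitRingType) (n N : nat) (T : lser F n).
Hypothesis hT : lbounded 0 T.

(* The operator identity (d + A) T = T (d + H), expanded by the Leibniz rule. *)
Definition intertwines (d : F -> F) (H A : lser F n) :=
  lmul N T H = ladd (lder d T) (lmul N A T).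

Lemma intertwines_comm_op d1 d2 p1 p2 (A1 A2 H1 H2 : lser F n) :
  is_derivation d1 -> is_derivation d2 -> (forall f, d1 (d2 f) = d2 (d1 f)) ->
  lbounded p1 A1 -> lbounded p1 H1 -> lbounded p2 A2 -> lbounded p2 H2 ->
  (p1 + p2 <= N)%N -> intertwines d1 H1 A1 -> intertwines d2 H2 A2 ->
  lmul N T (comm_op N d1 H1 d2 H2) = lmul N (comm_op N d1 A1 d2 A2) T.
Proof.
move=> hd1 hd2 hd12 hA1 hH1 hA2 hH2 hp E1 E2.
have TH12 : lmul N T (lmul N H1 H2) =
    ladd (lmul N (lder d1 T) H2) (ladd (lmul N A1 (lder d2 T)) (lmul N A1 (lmul N A2 T))).
  rewrite -(lmulA hT hH1 hH2) ?E1 ?lmulDl ?(lmulA hA1 hT hH2) ?E2 ?lmulDr //; lia.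
have TH21 : lmul N T (lmul N H2 H1) =
    ladd (lmul N (lder d2 T) H1) (ladd (lmul N A2 (lder d1 T)) (lmul N A2 (lmul N A1 T))).
  rewrite -(lmulA hT hH2 hH1) ?E2 ?lmulDl ?(lmulA hA2 hT hH1) ?E1 ?lmulDr //; lia.
have A12 : lmul N (lmul N A1 A2) T = lmul N A1 (lmul N A2 T).
  by rewrite (lmulA hA1 hA2 hT) //; lia.
have A21 : lmul N (lmul N A2 A1) T = lmul N A2 (lmul N A1 T).
  by rewrite (lmulA hA2 hA1 hT) //; lia.
rewrite !comm_opE !lmulDr !lmulNr !lmulDl !lmulNl TH12 TH21 A12 A21.
rewrite !lmul_lder // E1 E2 !lderD // !lderM //.
apply: functional_extensionality => k; rewrite /ladd /lopp.
by apply/matrixP => i j; rewrite !mxE hd12; ring.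
Qed.
End Intertwining.

Section Dressing.
Variables (F : comUnitRingType) (n N : nat) (T Tinv : lser F n).
Hypotheses (hT : lbounded 0 T) (hTinv : lbounded 0 Tinv).
Hypotheses (hTTinv : lmul N T Tinv = lone F n) (hTinvT : lmul N Tinv T = lone F n).

Lemma lbounded_conj_op d p (A : lser F n) : is_derivation d -> lbounded p A ->
  lbounded p (conj_op N d Tinv T A).
Proof.
move=> hd hA; apply: lbounded_ladd.
  exact: lbounded_le (leq0n p) (lbounded_lmul _ hTinv (lbounded_lder hd hT)).
by apply: lbounded_le (lbounded_lmul _ (lbounded_lmul _ hTinv hA) hT); rewrite addn0.
Qed.

Lemma conj_op_intertwines d p (A : lser F n) : is_derivation d -> lbounded p A ->
  (p <= N)%N -> intertwines N T d (conj_op N d Tinv T A) A.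
Proof.
move=> hd hA hp; have hdT := lbounded_lder hd hT.
rewrite /intertwines /conj_op lmulDr.
rewrite -(lmulA hT hTinv hdT) // hTTinv lmul1l; last exact: lbounded_le hdT.
rewrite -(lmulA hT (lbounded_lmul _ hTinv hA) hT) ?add0n ?addn0 //.
by rewrite -(lmulA hT hTinv hA) ?add0n // hTTinv lmul1l //; exact: lbounded_le hA.
Qed.

Lemma lmulI p (X Y : lser F n) : lbounded p X -> lbounded p Y -> (p <= N)%N ->
  lmul N T X = lmul N T Y -> X = Y.
Proof.
move=> hX hY hp eXY.
rewrite -(lmul1l (lbounded_le hp hX)) -(lmul1l (lbounded_le hp hY)) -hTinvT.
by rewrite (lmulA hTinv hT hX) ?(lmulA hTinv hT hY) ?eXY.
Qed.

Lemma conj_comm_op_eq0 d1 d2 p1 p2 (A1 A2 : lser F n) :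
  is_derivation d1 -> is_derivation d2 -> (forall f, d1 (d2 f) = d2 (d1 f)) ->
  lbounded p1 A1 -> lbounded p2 A2 -> (p1 + p2 <= N)%N ->
  comm_op N d1 A1 d2 A2 = (fun _ => 0) ->
  comm_op N d1 (conj_op N d1 Tinv T A1) d2 (conj_op N d2 Tinv T A2) = (fun _ => 0).
Proof.
move=> hd1 hd2 hd12 hA1 hA2 hp hcomm.
have hH1 := lbounded_conj_op hd1 hA1; have hH2 := lbounded_conj_op hd2 hA2.
apply: (lmulI (lbounded_comm_op _ hd1 hd2 hH1 hH2) _ hp); first by [].
rewrite (intertwines_comm_op hT hd1 hd2 hd12 hA1 hH1 hA2 hH2) //.
- by rewrite hcomm lmul0l lmul0r.
- exact: conj_op_intertwines hd1 hA1 (leq_trans (leq_addr p2 p1) hp).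
- exact: conj_op_intertwines hd2 hA2 (leq_trans (leq_addl p1 p2) hp).
Qed.
End Dressing.

Theorem mainTheorem8
  (F : comUnitRingType) (n : nat)
  (* d/dx^alpha, alpha = 1..n, and d/dt: pairwise commuting derivations *)
  (dx : 'I_n -> F -> F) (dt : F -> F)
  (hdx : forall a, is_derivation (dx a)) (hdt : is_derivation dt)
  (hdxx : forall a b f, dx a (dx b f) = dx b (dx a f))
  (hdxt : forall a f, dx a (dt f) = dt (dx a f))
  (* L_alpha = d/dx^alpha - hbar^{-1} C_alpha *)
  (C : 'I_n -> 'M[F]_n)
  (* b in Diag[hbar^{-1}]: b = sum_{j=0}^{db} b_{-j} hbar^{-j}, constant diagonal coefficients *)
  (db : nat) (b : lser F n)
  (hb_supp : forall k : int, (0 < k \/ k < - (db%:Z)) -> b k = 0)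
  (hb_diag : forall k, is_diag_mx (b k))
  (hb_const : forall k i j, (forall a, dx a (b k i j) = 0) /\ dt (b k i j) = 0)
  (* dressing transformation T in Mat[[hbar]], invertible with inverse Tinv *)
  (T Tinv : lser F n)
  (hT : forall k : int, k < 0 -> T k = 0) (hTinv : forall k : int, k < 0 -> Tinv k = 0)
  (hTTinv : lmul db.+1 T Tinv = lone F n) (hTinvT : lmul db.+1 Tinv T = lone F n)
  (* h_alpha = sum_{k >= -1} hbar^k h_{k,alpha}, h_{k,alpha} diagonal *)
  (h : 'I_n -> lser F n)
  (hh_supp : forall a (k : int), k < -1 -> h a k = 0)
  (hh_diag : forall a k, is_diag_mx (h a k))
  (* leading terms h_{-1,alpha} span Diag *)
  (hh_span : (\det (\matrix_(a < n, i < n) h a (-1) i i)) \is a GRing.unit)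
  (* T^{-1} L_alpha T = d/dx^alpha + h_alpha *)
  (hdress : forall a, conj_op db.+1 (dx a) Tinv T (hinv (- C a)) = h a)
  (* the L_alpha pairwise commute *)
  (hcomm : forall a c, comm_op db.+1 (dx a) (hinv (- C a)) (dx c) (hinv (- C c))
                        = (fun _ => 0))
  (* dL_alpha/dt = [phi(b)_{<= -1}, L_alpha], phi(b) = T b T^{-1} *)
  (hflow : forall a,
     lder dt (hinv (- C a)) =
     lopp (comm_op db.+1 (dx a) (hinv (- C a)) (fun _ => 0)
             (ltrunc (-1) (lmul db.+1 (lmul db.+1 T b) Tinv)))) :
  forall k : int, exists B : 'M[F]_n,
    is_diag_mx B /\
    forall a, map_mx dt (h a k) + map_mx (dx a) B = 0.
Proof.
pose P := ltrunc (-1) (lmul db.+1 (lmul db.+1 T b) Tinv).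
pose R := conj_op db.+1 dt Tinv T (lopp P).
have hT0 : lbounded 0 T by move=> k; rewrite oppr0; exact: hT.
have hTinv0 : lbounded 0 Tinv by move=> k; rewrite oppr0; exact: hTinv.
have hA a : lbounded 1 (hinv (- C a)) by move=> k hk; rewrite /hinv ifN //; lia.
have hb : lbounded db b by move=> k hk; apply: hb_supp; right.
have hP : lbounded db P.
  apply: lbounded_ltrunc; apply: lbounded_le (lbounded_lmul _ (lbounded_lmul _ hT0 hb) hTinv0).
  by rewrite add0n addn0.
have hR : lbounded db R := lbounded_conj_op _ hT0 hTinv0 hdt (lbounded_lopp hP).
have hRh a : comm_op db.+1 dt R (dx a) (h a) = (fun _ => 0).
  have hdtx f : dt (dx a f) = dx a (dt f) by rewrite hdxt.
  rewrite -hdress; apply: (conj_comm_op_eq0 hT0 hTinv0 hTTinv hTinvT hdt (hdx a) hdtx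
    (lbounded_lopp hP) (hA a)); first by rewrite addn1.
  exact: flow_comm_op_eq0.
clearbody R; move=> k; exists (diag_mx (\row_i - R k i i)); split; first exact: diag_mx_is_diag.
move=> a; apply/matrixP => i j; rewrite !mxE; have [<-|ij] := eqVneq i j.
  have hhN : lbounded db.+1 (h a) by apply: lbounded_le (hh_supp a); rewrite ltnS.
  have hRN : lbounded db.+1 R := lbounded_le (leqnSn db) hR.
  by rewrite mulr1n (derN (hdx a)) (comm_op_diag k i (hh_diag a) hhN hRN (hRh a)) subrr.
move/is_diag_mxP: (hh_diag a k) => -> //.
by rewrite mulr0n (der0 hdt) (der0 (hdx a)) addr0.
Qed.
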